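(* Let $n\ge3$, $1<\alpha\le\sqrt2$, $\overline\alpha=\sqrt{2-\alpha^2}$. Then the center density of $D_n^\alpha$ is $$\delta(D_n^\alpha)=\frac{1}{2^{n/2}\alpha^{n-3}(\alpha^3+\overline\alpha^3)}.$$
   Context: Let $\mathbf{e}_1,\dots,\mathbf{e}_n$ be the standard basis of $\mathbb{R}^n$. For $n\ge3$, $1\le\alpha\le\sqrt2$ and $\overline\alpha:=\sqrt{2-\alpha^2}$, $D_n^\alpha$ is the lattice with basis $\mathbf{b}_1=\alpha\mathbf{e}_1+\overline\alpha\mathbf{e}_2$, $\mathbf{b}_2=\alpha\mathbf{e}_2+\overline\alpha\mathbf{e}_3$, $\mathbf{b}_3=\overline\alpha\mathbf{e}_1+\alpha\mathbf{e}_3$, $\mathbf{b}_4=\overline\alpha\mathbf{e}_3-\alpha\mathbf{e}_4$, and $\mathbf{b}_k=\overline\alpha\mathbf{e}_{k-1}-\alpha\mathbf{e}_k$ for $5\le k\le n$. Center density: $\delta(\Lambda)=\lambda_1(\Lambda)^n/(2^n\operatorname{vol}(\Lambda))$. *)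

From HB Require Import structures.
From mathcomp Require Import all_boot all_order all_algebra.
From mathcomp Require Import boolp classical_sets reals.
Set Implicit Arguments. Unset Strict Implicit. Unset Printing Implicit Defensive.
Import Order.TTheory GRing.Theory Num.Theory.
Local Open Scope ring_scope.
Local Open Scope classical_set_scope.

Section Dna.
Variable R : realType.

Definition abar (a : R) : R := Num.sqrt (2 - a ^+ 2).

(* Coordinate j (1-based) of basis vector b_k (1-based) of D_n^a. *)
Definition Dentry (a : R) (k j : nat) : R :=
  if k == 1%N then (if j == 1%N then a else if j == 2%N then abar a else 0)
  else if k == 2%N then (if j == 2%N then a else if j == 3%N then abar a else 0)
  else if k == 3%N then (if j == 1%N then abar a else if j == 3%N then a else 0)
  else (if j == k.-1 then abar a else if j == k then - a else 0).

(* Basis matrix: row i is b_{i+1}, in coordinates w.r.t. e_1..e_n. *)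
Definition Dbasis (n : nat) (a : R) : 'M[R]_n :=
  \matrix_(i < n, j < n) Dentry a i.+1 j.+1.

Definition lattice (n : nat) (B : 'M[R]_n) : set 'rV[R]_n :=
  [set v | exists z : 'I_n -> int, v = \sum_(i < n) (z i)%:~R *: row i B].

Definition enorm (n : nat) (v : 'rV[R]_n) : R :=
  Num.sqrt (\sum_(j < n) v 0 j ^+ 2).

Definition lambda1 (n : nat) (B : 'M[R]_n) : R :=
  inf [set enorm v | v in [set v | lattice B v /\ v != 0]].

Definition covol (n : nat) (B : 'M[R]_n) : R := `|\det B|.

Definition center_density (n : nat) (B : 'M[R]_n) : R :=
  lambda1 B ^+ n / (2 ^+ n * covol B).

End Dna.

From HB Require Import structures.
From mathcomp Require Import all_boot all_order all_algebra.
From mathcomp Require Import boolp classical_sets reals.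
From mathcomp Require Import ring lra zify.
Set Implicit Arguments. Unset Strict Implicit. Unset Printing Implicit Defensive.
Import Order.TTheory GRing.Theory Num.Theory.
Local Open Scope ring_scope.

(* Put c = abar a, so that a^2 + c^2 = 2 and 0 <= c <= a.  A lattice vector
   v = sum_i y_i b_i (indices from 0 below) has coordinates v_j = a p_j + c q_j
   with the integer vectors
     p = (y_0, y_1, y_2, -y_3, ..., -y_(n-1)),
     q = (y_2, y_0, y_1 + y_3, y_4, ..., y_(n-1), 0).
   If y <> 0 then |p|^2 >= 1, <p, p + q> >= 1 (it is half a sum of squares)
   and |p + q|^2 >= 2 (it is a nonzero integer congruent mod 2 to
   sum (p + q) = 2 (y_0 + y_1 + y_2)).  Writing
     |v|^2 = 2(1 - ac) |p|^2 + 2(ac - c^2) <p, p + q> + c^2 |p + q|^2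
   with nonnegative weights shows |v|^2 >= 2, and |b_1|^2 = 2, so
   lambda_1 = sqrt 2.  The basis matrix is block lower triangular, with a 3x3
   block of determinant a^3 + c^3 and diagonal entries -a below it, which
   gives the covolume; the theorem then follows by arithmetic. *)

(* The real inequality behind lambda_1 = sqrt 2: the quadratic form
   a^2 X + c^2 Y + 2ac W is a nonnegative combination of X, X + W and
   X + Y + 2W whenever a^2 + c^2 = 2 and 0 <= c <= a. *)
Lemma weighted_form_ge2 (R : realDomainType) (a c X Y W : R) :
  0 <= c -> c <= a -> a ^+ 2 + c ^+ 2 = 2 ->
  1 <= X -> 1 <= X + W -> 2 <= X + Y + 2 * W ->
  2 <= a ^+ 2 * X + c ^+ 2 * Y + 2 * a * c * W.
Proof.
move=> c_ge0 c_le_a a2c2 hX hXW hXYW.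
have ac_le1 : a * c <= 1 by nra.
have w1 : 0 <= (1 - a * c) * (2 * X - 2) by apply: mulr_ge0; lra.
have w2 : 0 <= (a * c - c ^+ 2) * (2 * (X + W) - 2) by apply: mulr_ge0; nra.
have w3 : 0 <= c ^+ 2 * (X + Y + 2 * W - 2) by apply: mulr_ge0; [exact: sqr_ge0 | lra].
nra.
Qed.

Lemma telescope_ord (V : zmodType) (f : nat -> V) m :
  \sum_(k < m) (f k - f k.+1) = f 0%N - f m.
Proof.
rewrite -(big_mkord xpredT (fun k => f k - f k.+1)) -opprB -telescope_sumr //.
by rewrite -sumrN; apply: eq_bigr => k _; rewrite opprB.
Qed.

Lemma const_upto (T : Type) (f : nat -> T) m :
  (forall k, (k < m)%N -> f k = f k.+1) -> forall k, (k <= m)%N -> f k = f m.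
Proof.
move=> fS.
have shift : forall d k, (k + d)%N = m -> f k = f m.
  elim=> [|d IH] k hk; first by rewrite -hk addn0.
  by rewrite fS; [apply: IH | ]; lia.
by move=> k km; apply: (shift (m - k)%N); lia.
Qed.

(* Integer coordinates of a lattice vector with coefficient sequence y:
   v_j = a * pvec y j + abar a * qvec y j (0-based indices). *)
Definition pvec (y : nat -> int) (j : nat) : int :=
  if (j < 3)%N then y j else - y j.

(* Index of the coefficient carrying the abar-part of coordinate j. *)
Definition qidx (j : nat) : nat :=
  match j with 0 => 2 | 1 => 0 | 2 => 1 | _ => j.+1 end%N.

Definition qvec (y : nat -> int) (j : nat) : int :=
  y (qidx j) + (if j == 2%N then y 3%N else 0).

(* p + q: the coordinates the lattice vector would have for a = abar a = 1. *)
Definition svec (y : nat -> int) (j : nat) : int := pvec y j + qvec y j.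

Lemma sqr_int_ge1 (x : int) : x != 0 -> 1 <= x ^+ 2.
Proof. by move=> x_neq0; nia. Qed.

Lemma dvd2_sqr_sub (x : int) : (2 %| x ^+ 2 - x)%Z.
Proof. by apply/dvdzP; exists ((x %/ 2)%Z * (x - 1 + (x %% 2)%Z)); nia. Qed.

Lemma psum_eq0_at (N : nat) (F : 'I_N -> int) (i : 'I_N) :
  (forall j, 0 <= F j) -> \sum_(j < N) F j = 0 -> F i = 0.
Proof. by move=> F_ge0 /psumr_eq0P; apply. Qed.

Section CoefficientBounds.
Variables (m : nat) (y : nat -> int).
Hypothesis y_end : y m.+3 = 0.
Hypothesis y_nz : exists2 i, (i < m.+3)%N & y i != 0.

Lemma tail_eq0 :
  (forall k, (k < m)%N -> y k.+3 = y k.+4) -> forall k, (k <= m)%N -> y k.+3 = 0.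
Proof.
move=> ytail k km; rewrite -y_end.
exact: (@const_upto _ (fun k => y k.+3) m ytail k km).
Qed.

Lemma not_all_vanish :
  y 0%N = 0 -> y 1%N = 0 -> y 2%N = 0 ->
  (forall k, (k < m)%N -> y k.+3 = y k.+4) -> False.
Proof.
move=> y0 y1 y2 /tail_eq0 tail0.
case: y_nz => -[|[|[|i]]] hi; rewrite ?y0 ?y1 ?y2 ?tail0 ?eqxx //; lia.
Qed.

Lemma pvec_sq_ge1 : 1 <= \sum_(j < m.+3) pvec y j ^+ 2.
Proof.
case: y_nz => i hi y_neq0; rewrite (bigD1 (Ordinal hi)) //=.
have p_neq0 : pvec y i != 0 by rewrite /pvec; case: ifP; rewrite ?oppr_eq0.
apply: le_trans (sqr_int_ge1 p_neq0) _; rewrite lerDl.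
by apply: sumr_ge0 => j _; apply: sqr_ge0.
Qed.

Lemma pvec_dot_sqr :
  2 * \sum_(j < m.+3) pvec y j * svec y j =
  y 0%N ^+ 2 + y 1%N ^+ 2 + (y 0%N + y 1%N + y 2%N) ^+ 2 + (y 2%N + y 3%N) ^+ 2
  + \sum_(k < m) (y k.+3 - y k.+4) ^+ 2.
Proof.
rewrite mulr_sumr !big_ord_recl /=.
have tail : \sum_(k < m) 2 * (pvec y k.+3 * svec y k.+3) =
   \sum_(k < m) (y k.+3 - y k.+4) ^+ 2 + \sum_(k < m) (y k.+3 ^+ 2 - y k.+4 ^+ 2).
  by rewrite -big_split; apply: eq_bigr => k _; rewrite /svec /pvec /qvec /=; ring.
rewrite tail (telescope_ord (fun k => y k.+3 ^+ 2)) y_end /svec /pvec /qvec /=.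
ring.
Qed.

Lemma pvec_dot_ge1 : 1 <= \sum_(j < m.+3) pvec y j * svec y j.
Proof.
have := pvec_dot_sqr; set S := \sum_(j < m.+3) _; set T := \sum_(k < m) _.
have T_ge0 : 0 <= T by apply: sumr_ge0 => k _; apply: sqr_ge0.
move=> hS; rewrite leNgt; apply/negP => S_lt1.
have T0 : T = 0 by nia.
apply: not_all_vanish; [nia | nia | nia | move=> k km].
have := psum_eq0_at (F := fun k : 'I_m => (y k.+3 - y k.+4) ^+ 2) (Ordinal km)
  (fun _ => sqr_ge0 _) T0.
by move=> /= sq0; nia.
Qed.

(* The sum of p + q telescopes. *)
Lemma svec_sum : \sum_(j < m.+3) svec y j = 2 * (y 0%N + y 1%N + y 2%N).
Proof.
rewrite !big_ord_recl /=.
have tail : \sum_(k < m) svec y k.+3 = - \sum_(k < m) (y k.+3 - y k.+4).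
  by rewrite -sumrN; apply: eq_bigr => k _; rewrite /svec /pvec /qvec /=; ring.
rewrite tail (telescope_ord (fun k => y k.+3)) y_end /svec /pvec /qvec /=.
ring.
Qed.

(* |p + q|^2 >= 2: it is nonzero, and even because it has the parity of
   sum (p + q) = 2 (y_0 + y_1 + y_2). *)
Lemma svec_sq_ge2 : 2 <= \sum_(j < m.+3) svec y j ^+ 2.
Proof.
set S := \sum_(j < m.+3) _.
have S_split :
    S = \sum_(j < m.+3) svec y j + \sum_(j < m.+3) (svec y j ^+ 2 - svec y j).
  by rewrite -big_split; apply: eq_bigr => j _ /=; rewrite addrC subrK.
have /dvdzP[d hd] : (2 %| \sum_(j < m.+3) (svec y j ^+ 2 - svec y j))%Z.
  by apply: rpred_sum => j _; apply: dvd2_sqr_sub.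
rewrite svec_sum hd in S_split.
have S_ge0 : 0 <= S by apply: sumr_ge0 => j _; apply: sqr_ge0.
rewrite leNgt; apply/negP => S_lt2.
have S0 : S = 0 by lia.
have s_zero j : (j < m.+3)%N -> svec y j = 0.
  move=> hj; have := psum_eq0_at (Ordinal hj) (fun _ => sqr_ge0 _) S0.
  by move=> /= sq0; nia.
have ytail k : (k < m)%N -> y k.+3 = y k.+4.
  by move=> km; have := s_zero k.+3; rewrite /svec /pvec /qvec /=; lia.
have y3 := tail_eq0 ytail (leq0n m).
have := s_zero 0%N isT; have := s_zero 1%N isT; have := s_zero 2%N isT.
rewrite /svec /pvec /qvec /= y3 => s_2 s_1 s_0.
by apply: not_all_vanish ytail; lia.
Qed.

End CoefficientBounds.

Section Dbasis.
Variable R : realType.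
Implicit Types (a : R).

Lemma sqr_le2 a : 0 <= a -> a <= Num.sqrt 2 -> a ^+ 2 <= 2.
Proof. by move=> a_ge0 a_le; rewrite -ler_sqrt ?ler0n // sqrtr_sqr ger0_norm. Qed.

Lemma abar_sqr a : a ^+ 2 <= 2 -> abar a ^+ 2 = 2 - a ^+ 2.
Proof. by move=> a2; rewrite sqr_sqrtr // subr_ge0. Qed.

Lemma abar_le a : 1 <= a -> a ^+ 2 <= 2 -> abar a <= a.
Proof.
move=> a_ge1 a2; have := abar_sqr a2; have := sqrtr_ge0 (2 - a ^+ 2).
by rewrite -/(abar a); nra.
Qed.

Lemma Dentry_dec a (i j : nat) : Dentry a i.+1 j.+1 =
  (if i == j then (if (j < 3)%N then a else - a) else 0)
  + (if i == qidx j then abar a else 0)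
  + (if (j == 2%N) && (i == 3%N) then abar a else 0).
Proof.
rewrite /Dentry.
case: i => [|[|[|[|i]]]]; case: j => [|[|[|[|j]]]] /=; rewrite ?addr0 ?add0r //.
  by rewrite !eqSS eq_sym.
rewrite !eqSS [j.+1 == i]eq_sym [j == i]eq_sym.
have [->|ne] := eqVneq i j; last by rewrite add0r.
by rewrite (ltn_eqF (ltnSn j)) addr0.
Qed.

Section LatticeCoordinates.
Variables (n : nat) (z : 'I_n -> int).

Definition zext (k : nat) : int := oapp z 0 (insub k : option 'I_n).

Lemma zextE (i : 'I_n) : zext i = z i.
Proof. by rewrite /zext valK. Qed.

Lemma zext_out k : (n <= k)%N -> zext k = 0.
Proof. by move=> nk; rewrite /zext insubF // ltnNge nk. Qed.

Lemma sum_zext_delta (x : R) k :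
  \sum_(i < n) (zext i)%:~R * (if (i : nat) == k then x else 0) = (zext k)%:~R * x.
Proof.
case: (ltnP k n) => [kn | nk].
  rewrite (bigD1 (Ordinal kn)) //= eqxx big1 ?addr0 // => i /negbTE ne.
  by rewrite -val_eqE /= in ne; rewrite ne mulr0.
rewrite zext_out // mul0r big1 // => i _; rewrite ifN ?mulr0 //.
by apply: contraTneq (ltn_ord i) => ->; rewrite -leqNgt.
Qed.

Lemma lattice_coord a (j : 'I_n) :
  (\sum_(i < n) (z i)%:~R *: row i (Dbasis n a)) 0 j =
  a * (pvec zext j)%:~R + abar a * (qvec zext j)%:~R.
Proof.
rewrite summxE.
under eq_bigr => i _ do rewrite !mxE Dentry_dec -zextE !mulrDr.
rewrite !big_split /= !sum_zext_delta.
have -> : \sum_(i < n) (zext i)%:~R *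
    (if (j == 2%N :> nat) && (i == 3%N :> nat) then abar a else 0) =
    if (j == 2%N :> nat) then (zext 3)%:~R * abar a else 0.
  by case: eqP => _ /=; rewrite ?sum_zext_delta // big1 // => i _; rewrite mulr0.
rewrite /pvec /qvec; case: ifP => _; case: eqP => _; rewrite ?intrD ?intrN /=; ring.
Qed.

End LatticeCoordinates.

Lemma lattice_norm_ge2 a m (z : 'I_m.+3 -> int) :
  1 < a -> a <= Num.sqrt 2 -> (exists i, z i != 0) ->
  2 <= \sum_(j < m.+3) ((\sum_(i < m.+3) (z i)%:~R *: row i (Dbasis m.+3 a)) 0 j) ^+ 2.
Proof.
move=> a_gt1 a_le [i0 z_neq0].
have a2 : a ^+ 2 <= 2 by apply: sqr_le2; lra.
set y := zext z; set c := abar a.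
have y_end : y m.+3 = 0 := zext_out z (leqnn _).
have y_nz : exists2 i, (i < m.+3)%N & y i != 0 by exists i0; rewrite // /y zextE.
under eq_bigr => j _ do rewrite lattice_coord.
set P := fun j : nat => (pvec y j)%:~R : R; set Q := fun j : nat => (qvec y j)%:~R : R.
set X := \sum_(j < m.+3) P j ^+ 2; set Y := \sum_(j < m.+3) Q j ^+ 2.
set W := \sum_(j < m.+3) P j * Q j.
have -> : \sum_(j < m.+3) (a * P j + c * Q j) ^+ 2 = a ^+ 2 * X + c ^+ 2 * Y + 2 * a * c * W.
  by rewrite !mulr_sumr -!big_split; apply: eq_bigr => j _ /=; ring.
apply: weighted_form_ge2; first exact: sqrtr_ge0.
- by apply: abar_le; lra.
- by rewrite abar_sqr // addrC subrK.
- have := pvec_sq_ge1 y_nz; rewrite -(ler_int R) rmorph_sum /=.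
  by under eq_bigr => j _ do rewrite rmorphXn.
- have -> : X + W = \sum_(j < m.+3) P j * (P j + Q j).
    by rewrite -big_split; apply: eq_bigr => j _ /=; ring.
  have := pvec_dot_ge1 y_end y_nz; rewrite -(ler_int R) rmorph_sum /=.
  by under eq_bigr => j _ do rewrite rmorphM rmorphD.
- have -> : X + Y + 2 * W = \sum_(j < m.+3) (P j + Q j) ^+ 2.
    by rewrite mulr_sumr -!big_split; apply: eq_bigr => j _ /=; ring.
  have := svec_sq_ge2 y_end y_nz; rewrite -(ler_int R) rmorph_sum /=.
  by under eq_bigr => j _ do rewrite rmorphXn rmorphD.
Qed.

End Dbasis.

Section MinimumDistance.
Variables (R : realType) (n : nat) (B : 'M[R]_n).

Lemma lattice_row (i : 'I_n) : lattice B (row i B).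
Proof.
exists (fun k => (k == i)%:Z); rewrite (bigD1 i) //= eqxx scale1r big1 ?addr0 //.
by move=> k /negbTE ->; rewrite scale0r.
Qed.

Lemma lambda1_attained (v0 : 'rV[R]_n) (r : R) :
  lattice B v0 -> v0 != 0 -> enorm v0 = r ->
  (forall v, lattice B v -> v != 0 -> r <= enorm v) -> lambda1 B = r.
Proof.
move=> v0_in v0_neq0 <- v_ge; rewrite /lambda1; set E := (X in inf X).
have v0_E : E (enorm v0) by exists v0.
have lbE : lbound E (enorm v0) by move=> _ [v [v_in v_neq0] <-]; exact: v_ge.
apply/le_anti/andP; split; first by apply: ge_inf v0_E; exists (enorm v0).
by apply: lb_le_inf => //; exists (enorm v0).
Qed.

End MinimumDistance.

(* The minimum distance of D_n^a is sqrt 2, attained by b_1. *)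
Lemma lambda1_Dbasis (R : realType) (a : R) m :
  1 < a -> a <= Num.sqrt 2 -> lambda1 (Dbasis m.+3 a) = Num.sqrt 2.
Proof.
move=> a_gt1 a_le; have a2 : a ^+ 2 <= 2 by apply: sqr_le2; lra.
apply: (lambda1_attained (lattice_row _ 0)).
- by apply/eqP => /matrixP /(_ 0 0); rewrite !mxE /Dentry /=; lra.
- rewrite /enorm; congr Num.sqrt.
  rewrite !big_ord_recl big1 => [|k _]; last by rewrite !mxE /Dentry /= expr0n.
  by rewrite !mxE /Dentry /= expr0n abar_sqr //= !addr0 addrC subrK.
move=> _ [z ->] v_neq0; rewrite /enorm ler_sqrt; last first.
  by apply: sumr_ge0 => j _; apply: sqr_ge0.
apply: lattice_norm_ge2 => //; apply/existsP; apply: contraNT v_neq0.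
move=> /existsPn z0; apply/eqP; apply: big1 => i _.
by move: (z0 i); rewrite negbK => /eqP ->; rewrite scale0r.
Qed.

(* b_1, b_2, b_3 span a 3-dimensional block of determinant a^3 + abar^3,
   and b_4, ..., b_n are lower triangular with diagonal -a. *)
Lemma det_Dbasis (R : realType) (a : R) m :
  \det (Dbasis m.+3 a) = (a ^+ 3 + abar a ^+ 3) * (- a) ^+ m.
Proof.
change (\det (Dbasis (3 + m) a) = (a ^+ 3 + abar a ^+ 3) * (- a) ^+ m).
set D := Dbasis (3 + m) a.
have ur0 : ursubmx D = 0.
  apply/matrixP => i j; rewrite !mxE /= !addSn add0n.
  by case: i => [[|[|[|i]]] hi].
have lr_trig : is_trig_mx (drsubmx D).
  apply/is_trig_mxP => i j ij; rewrite !mxE /= !addSn !add0n Dentry_dec /=.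
  by rewrite !ifF ?addr0 //; apply/eqP; lia.
rewrite -[D]submxK ur0 det_lblock (det_trig lr_trig); congr (_ * _).
  rewrite (expand_det_row _ 0) !big_ord_recl big_ord0 /cofactor.
  rewrite !(expand_det_row _ 0) !big_ord_recl !big_ord0 /cofactor !det_mx11.
  by rewrite !mxE /bump /= /Dentry /=; ring.
under eq_bigr => i _ do
  rewrite !mxE /= !addSn add0n Dentry_dec eqxx /= (ltn_eqF (ltnSn i.+3)) !addr0.
by rewrite prodr_const card_ord.
Qed.

Theorem mainTheorem16 (R : realType) (n : nat) (a : R) :
  (3 <= n)%N -> 1 < a -> a <= Num.sqrt 2 ->
  center_density (Dbasis n a) =
  1 / (Num.sqrt 2 ^+ n * a ^+ (n - 3) * (a ^+ 3 + abar a ^+ 3)).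
Proof.
case: n => [|[|[|m]]] // _ a_gt1 a_le.
rewrite /center_density /covol lambda1_Dbasis // det_Dbasis subSS subSS subSS subn0.
have a_gt0 : 0 < a by lra.
have s_gt0 : 0 < a ^+ 3 + abar a ^+ 3.
  by apply: ltr_wpDr; [apply/exprn_ge0/sqrtr_ge0 | apply: exprn_gt0].
rewrite normrM normrX normrN !gtr0_norm //.
have two_sqr : (2 : R) ^+ m.+3 = Num.sqrt 2 ^+ m.+3 * Num.sqrt 2 ^+ m.+3.
  by rewrite -exprMn -expr2 sqr_sqrtr ?ler0n.
have sqrt2_gt0 : 0 < Num.sqrt (2 : R) by rewrite sqrtr_gt0.
rewrite two_sqr; field.
by rewrite !expf_neq0 ?gt_eqF.
Qed.
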